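(* Let $n\ge 1$ and let $\mathbb{X}:=\{x\in[0,1]^n \mid \sum_{i=1}^n x_i=1\}$ be the standard simplex. For $p\in\mathbb{R}^n$ let $\mathscr{M}(p):=\arg\max_{x\in\mathbb{X}} p^\top x$. Fix any $q\in\mathbb{R}^n$ and any $\bar{x}\in\mathscr{M}(q)$. Then the only vector $x\in\mathbb{X}$ satisfying $$x\in\mathscr{M}(\bar{x}-x+q)$$ is $x=\bar{x}$.
   Context: $\mathscr{M}:\mathbb{R}^n\to 2^{\mathbb{X}}$ is the best response map, i.e. $\mathscr{M}(p)$ is the set of maximizers of the linear function $x\mapsto p^\top x$ over the simplex $\mathbb{X}$. *)

From mathcomp Require Import all_boot all_order all_algebra.
Set Implicit Arguments. Unset Strict Implicit. Unset Printing Implicit Defensive.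
Import Order.TTheory GRing.Theory Num.Theory.
Local Open Scope ring_scope.

Definition dotv (R : realFieldType) (n : nat) (p x : 'cV[R]_n) : R :=
  \sum_(i < n) p i 0 * x i 0.

Definition simplex (R : realFieldType) (n : nat) (x : 'cV[R]_n) : Prop :=
  (forall i, 0 <= x i 0 <= 1) /\ \sum_(i < n) x i 0 = 1.

Definition best_response (R : realFieldType) (n : nat) (p x : 'cV[R]_n) : Prop :=
  simplex x /\ forall y, simplex y -> dotv p y <= dotv p x.

(* The best-response map is a monotone operator: if [x] maximises [p^T] and
   [y] maximises [p'^T] over the simplex, then [(p - p')^T (x - y) >= 0].
   Applied to [p = xbar - x + q] and [p' = q], whose difference is
   [xbar - x], this gives [-|x - xbar|^2 >= 0], hence [x = xbar]. *)
From mathcomp Require Import all_boot all_order all_algebra.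
Set Implicit Arguments.
Unset Strict Implicit.
Unset Printing Implicit Defensive.

Import Order.TTheory GRing.Theory Num.Theory.
Local Open Scope ring_scope.

Section BestResponse.

Variables (R : realFieldType) (n : nat).
Implicit Types p x y : 'cV[R]_n.

Lemma dotvBl p p' x : dotv (p - p') x = dotv p x - dotv p' x.
Proof. by rewrite /dotv -sumrB; apply: eq_bigr => i _; rewrite !mxE mulrBl. Qed.

Lemma dotvBr p x y : dotv p (x - y) = dotv p x - dotv p y.
Proof. by rewrite /dotv -sumrB; apply: eq_bigr => i _; rewrite !mxE mulrBr. Qed.

Lemma dotvNl p x : dotv (- p) x = - dotv p x.
Proof. by rewrite /dotv -sumrN; apply: eq_bigr => i _; rewrite !mxE mulNr. Qed.

Lemma dotv_self_eq0 x : (dotv x x == 0) = (x == 0).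
Proof.
apply/idP/eqP => [|->]; last by rewrite /dotv big1 // => i _; rewrite mxE mul0r.
rewrite /dotv psumr_eq0 => [/allP x0|i _]; last by rewrite -expr2 sqr_ge0.
apply/matrixP => i j; rewrite (ord1 j) mxE.
have /implyP x0i := x0 i (mem_index_enum i).
by apply/eqP; rewrite -sqrf_eq0 expr2 x0i.
Qed.

Lemma dotv_self_ge0 x : 0 <= dotv x x.
Proof. by apply: sumr_ge0 => i _; rewrite -expr2 sqr_ge0. Qed.

Lemma best_response_monotone p p' x y :
  best_response p x -> best_response p' y -> 0 <= dotv (p - p') (x - y).
Proof.
move=> [sx px] [sy py].
rewrite dotvBl !dotvBr opprB.
by apply: addr_ge0; rewrite subr_ge0 ?px ?py.
Qed.

End BestResponse.

Theorem lemma1 (R : realFieldType) (n : nat) (hn : (1 <= n)%N)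
  (q xbar : 'cV[R]_n) (hxbar : best_response q xbar) (x : 'cV[R]_n) :
  simplex x -> best_response (xbar - x + q) x -> x = xbar.
Proof.
move=> _ hx; have := best_response_monotone hx hxbar.
rewrite addrK -opprB dotvNl oppr_ge0 => le0.
have : dotv (x - xbar) (x - xbar) == 0 by rewrite eq_le le0 dotv_self_ge0.
by rewrite dotv_self_eq0 subr_eq0 => /eqP.
Qed.
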